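(* Let $G$ be an interval graph and consider an instance of \textsc{Requirement Induced Disjoint Paths} on $G$. Suppose some vertex $u$ of $G$ represents three terminals belonging to three different terminal pairs, and for each of these three terminals, the vertex representing its partner (the other terminal of its pair) is at distance at least $2$ from $u$ in $G$. Then the instance is a no-instance.
   Context: All graphs are finite, undirected, without loops or multiple edges. For a path $P=v_1\cdots v_r$, the vertices $v_1,v_r$ are its ends and $v_2,\ldots,v_{r-1}$ its inner vertices. An edge $v_iv_j$ with $i+1<j$ is an inner chord of $P$ if $v_i$ or $v_j$ is an inner vertex of $P$. Distinct paths $P_1,\ldots,P_\ell$ are mutually induced if (i) no $P_i$ has an inner chord; (ii) two distinct paths $P_i,P_j$ share only vertices that are ends of both paths; (iii) no inner vertex $u$ of some $P_i$ is adjacent to a vertex $v$ of some $P_j$ with $j\neq i$, unless $v$ is an end of both $P_i$ and $P_j$. \textsc{Requirement Induced Disjoint Paths}: the input is a graph $G$, $k$ terminal pairs $(s_1,t_1),\ldots,(s_k,t_k)$ and positive integers $r_1,\ldots,r_k$. Each terminal is placed on (''represented by'') a vertex of $G$; several terminals may be represented by the same vertex, but $s_i$ and $t_i$ are represented by distinct vertices, and the unordered pairs of representing vertices are pairwise distinct for different $i$. The terminals $s_i$ and $t_i$ are called partners. The question is whether $G$ has $\ell=r_1+\cdots+r_k$ mutually induced paths such that, for each $i$, exactly $r_i$ of them join the vertex representing $s_i$ and the vertex representing $t_i$. An interval graph is a graph whose vertices can be assigned intervals of the real line so that two vertices are adjacent iff their intervals intersect. *)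

From Stdlib Require Import Reals.
From mathcomp Require Import all_boot.
Set Implicit Arguments. Unset Strict Implicit. Unset Printing Implicit Defensive.

Definition simple_graph (T : finType) (e : rel T) : Prop :=
  symmetric e /\ irreflexive e.

Definition interval_graph (T : finType) (e : rel T) : Prop :=
  exists (lft rgt : T -> R),
    (forall x, Rle (lft x) (rgt x)) /\
    (forall x y, x != y -> (e x y <-> (Rle (lft x) (rgt y) /\ Rle (lft y) (rgt x)))).

Definition is_gpath (T : finType) (e : rel T) (p : seq T) : Prop :=
  match p with
  | [::] => False
  | x :: q => path e x q /\ uniq p
  end.

Definition ends (T : eqType) (p : seq T) : seq T :=
  match p with
  | [::] => [::]
  | x :: q => [:: x; last x q]
  end.

Definition inner (T : eqType) (p : seq T) : seq T :=
  drop 1 (take (size p).-1 p).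

(* No inner chord: an edge v_i v_j with i+1 < j (indices 0-based here) is an
   inner chord if v_i or v_j is inner, i.e. unless i = 0 and j = r-1. *)
Definition no_inner_chord (T : finType) (e : rel T) (p : seq T) : Prop :=
  forall (x0 : T) (i j : nat), i.+1 < j -> j < size p ->
    e (nth x0 p i) (nth x0 p j) -> i = 0 /\ j = (size p).-1.

Definition induced_pair (T : finType) (e : rel T) (P P' : seq T) : Prop :=
  (forall v, v \in P -> v \in P' -> v \in ends P /\ v \in ends P') /\
  (forall u v, u \in inner P -> v \in P' -> e u v ->
     v \in ends P /\ v \in ends P').

Definition rid_solution (T : finType) (e : rel T) (k : nat)
    (s t : 'I_k -> T) (r : 'I_k -> nat) (Q : 'I_k -> seq (seq T)) : Prop :=
  (forall i, size (Q i) = r i /\ uniq (Q i)) /\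
  (forall i P, P \in Q i ->
     is_gpath e P /\ head (s i) P = s i /\ last (s i) P = t i /\
     no_inner_chord e P) /\
  (forall i j P P', P \in Q i -> P' \in Q j -> (i != j \/ P != P') ->
     induced_pair e P P').

Definition rid_instance (T : finType) (e : rel T) (k : nat)
    (s t : 'I_k -> T) (r : 'I_k -> nat) : Prop :=
  (forall i, 0 < r i) /\
  (forall i, s i != t i) /\
  (forall i j, i != j ->
     ~ ((s i = s j /\ t i = t j) \/ (s i = t j /\ t i = s j))).

(* u represents a terminal of pair i whose partner is at distance >= 2 from u
   (i.e. the partner is neither u nor a neighbour of u). *)
Definition far_terminal_at (T : finType) (e : rel T) (k : nat)
    (s t : 'I_k -> T) (u : T) (i : 'I_k) : Prop :=
  (s i = u /\ t i != u /\ ~~ e u (t i)) \/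
  (t i = u /\ s i != u /\ ~~ e u (s i)).

(* The second vertex x of any induced path leaving u towards a vertex at
   distance at least 2 is an inner vertex adjacent to u that has a neighbour
   outside the closed neighbourhood of u.  Three terminals at u give three such
   vertices, one per terminal pair; being inner vertices of mutually induced
   paths they are pairwise distinct and non-adjacent, so their intervals are
   pairwise disjoint while all meeting the interval of u.  The middle one is
   then contained in the interval of u, so every neighbour of it is a
   neighbour of u, a contradiction. *)
From Stdlib Require Import Reals Lra.
From mathcomp Require Import all_boot zify.

Set Implicit Arguments.
Unset Strict Implicit.
Unset Printing Implicit Defensive.

Definition apart (T : eqType) (e : rel T) (x y : T) : bool := (x != y) && ~~ e x y.

Section Inner.

Variable T : eqType.
Implicit Types (P q : seq T) (a b x : T).

Lemma inner_cons_rcons a q b : inner (a :: rcons q b) = q.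
Proof. by rewrite /inner /= size_rcons /= drop0 -cats1 take_size_cat. Qed.

Lemma ends_cons_rcons a q b : ends (a :: rcons q b) = [:: a; b].
Proof. by rewrite /= last_rcons. Qed.

Lemma head_rev d P : head d (rev P) = last d P.
Proof. by case/lastP: P => [|q b]; rewrite ?rev_rcons ?last_rcons. Qed.

Lemma last_rev d P : last d (rev P) = head d P.
Proof. by case: P => [|a q]; rewrite ?rev_cons ?last_rcons. Qed.

Lemma inner_rev P : inner (rev P) = rev (inner P).
Proof.
case: P => [|a q]; first by [].
case/lastP: q => [|q b]; first by [].
by rewrite rev_cons rev_rcons rcons_cons inner_cons_rcons inner_cons_rcons.
Qed.

Lemma mem_inner P x : x \in inner P -> x \in P.
Proof.
case: P => [|a q]; first by [].
case/lastP: q => [|q b]; first by [].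
by rewrite inner_cons_rcons => xq; rewrite inE mem_rcons inE xq !orbT.
Qed.

Lemma inner_notin_ends P x : uniq P -> x \in inner P -> x \notin ends P.
Proof.
case: P => [|a q]; first by [].
case/lastP: q => [|q b]; first by [].
rewrite inner_cons_rcons ends_cons_rcons /= rcons_uniq mem_rcons inE negb_or.
case/andP=> /andP[ab aq] /andP[bq _] xq; rewrite !inE negb_or.
by apply/andP; split; [apply: contraNneq aq | apply: contraNneq bq] => <-.
Qed.

End Inner.

Section ChordlessPaths.

Variables (T : finType) (e : rel T).
Hypothesis esym : symmetric e.

Lemma gpath_rev P : is_gpath e P -> is_gpath e (rev P).
Proof.
case: P => [|x q] //= [ep uP]; rewrite lastI rev_rcons; split.
  by rewrite rev_path; apply: sub_path ep => y z; rewrite esym.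
by rewrite -rev_rcons -lastI rev_uniq.
Qed.

Lemma no_inner_chord_rev P : no_inner_chord e P -> no_inner_chord e (rev P).
Proof.
rewrite /no_inner_chord size_rev => chordless x0 i j ij jP.
have iP : i < size P by lia.
rewrite !nth_rev // esym => /(chordless x0) [||]; lia.
Qed.

Lemma chordless_path_escapes d u w P :
  is_gpath e P -> no_inner_chord e P -> head d P = u -> last d P = w ->
  apart e u w -> exists x y, [/\ x \in inner P, e u x, e x y & apart e u y].
Proof.
case: P => [|a [|x [|y q]]] //= [ep uP] chordless <-.
- by move=> <-; rewrite /apart eqxx.
- by move=> <-; rewrite /apart; case/andP: ep => ->; rewrite andbF.
move=> lastP uw; case/and3P: ep => ax xy _.
exists x, y; split=> //; first by rewrite /inner /= inE eqxx.
case/andP: uP => aP _; apply/andP; split.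
  by apply: contraNneq aP => <-; rewrite !inE eqxx orbT.
apply/negP=> ay; have [_ /= size_q] := chordless a 0 2 isT isT ay.
have q0 : q = [::] by case: q {chordless lastP aP} size_q.
by move: uw; rewrite -lastP q0 /apart ay andbF.
Qed.

Lemma chordless_path_escapes_sym d u w P :
  is_gpath e P -> no_inner_chord e P ->
  (head d P = u /\ last d P = w) \/ (head d P = w /\ last d P = u) ->
  apart e u w -> exists x y, [/\ x \in inner P, e u x, e x y & apart e u y].
Proof.
move=> gP cP [[hP lP]|[hP lP]] uw; first exact: chordless_path_escapes hP lP uw.
have [x [y [xP uxy]]] := chordless_path_escapes (gpath_rev gP)
  (no_inner_chord_rev cP) (etrans (head_rev d P) lP) (etrans (last_rev d P) hP) uw.
by exists x, y; rewrite inner_rev mem_rev in xP.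
Qed.

End ChordlessPaths.

Section InducedPaths.

Variables (T : finType) (e : rel T).

Lemma gpath_uniq P : is_gpath e P -> uniq P.
Proof. by case: P => [|x q] // []. Qed.

Lemma induced_pair_inner_apart P P' x x' :
  uniq P -> uniq P' -> induced_pair e P P' ->
  x \in inner P -> x' \in inner P' -> apart e x x'.
Proof.
move=> uP uP' [shared_ends inner_nbrs] xP x'P'; apply/andP; split.
  apply/eqP => xx'; rewrite -{}xx' in x'P'.
  have [xe _] := shared_ends x (mem_inner xP) (mem_inner x'P').
  by move: (inner_notin_ends uP xP); rewrite xe.
apply/negP => exx'; have [_ x'e] := inner_nbrs x x' xP (mem_inner x'P') exx'.
by move: (inner_notin_ends uP' x'P'); rewrite x'e.
Qed.

Lemma solution_inner_apart k (s t : 'I_k -> T) r Q i j P P' x x' :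
  rid_solution e s t r Q -> i != j -> P \in Q i -> P' \in Q j ->
  x \in inner P -> x' \in inner P' -> apart e x x'.
Proof.
move=> [_ [paths induced]] ij PQ P'Q; apply: induced_pair_inner_apart.
- by have [/gpath_uniq] := paths i P PQ.
- by have [/gpath_uniq] := paths j P' P'Q.
exact: induced _ _ _ _ PQ P'Q (or_introl ij).
Qed.

Lemma solution_escapes_far_terminal k (s t : 'I_k -> T) r Q u j :
  symmetric e -> rid_instance e s t r -> rid_solution e s t r Q ->
  far_terminal_at e s t u j ->
  exists P x y, [/\ P \in Q j, x \in inner P, e u x, e x y & apart e u y].
Proof.
move=> esym [r_gt0 _] [sizeQ [paths _]] far.
set P := nth [::] (Q j) 0.
have PQ : P \in Q j by apply: mem_nth; rewrite (sizeQ j).1 r_gt0.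
have [gP [hP [lP cP]]] := paths j P PQ.
suff [x [y []]] : exists x y, [/\ x \in inner P, e u x, e x y & apart e u y].
  by move=> *; exists P, x, y.
case: far => [[su [tu ut]] | [tu [su us]]].
- apply: (chordless_path_escapes_sym (d := s j) (w := t j) esym gP cP).
    by left; rewrite -su.
  by rewrite /apart eq_sym tu.
- apply: (chordless_path_escapes_sym (d := s j) (w := s j) esym gP cP).
    by right; rewrite -tu.
  by rewrite /apart eq_sym su.
Qed.

End InducedPaths.

Section IntervalModel.

Local Open Scope R_scope.

Variables (T : finType) (e : rel T) (lft rgt : T -> R).
Hypothesis e_irr : irreflexive e.
Hypothesis lft_le_rgt : forall x, lft x <= rgt x.
Hypothesis edge_iff :
  forall x y, x != y -> (e x y <-> (lft x <= rgt y /\ lft y <= rgt x)).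

Lemma edge_intervals x y : e x y -> lft x <= rgt y /\ lft y <= rgt x.
Proof.
move=> exy; apply/edge_iff => //.
by apply: contraTneq exy => ->; rewrite e_irr.
Qed.

Lemma apart_intervals x y : apart e x y -> rgt x < lft y \/ rgt y < lft x.
Proof.
case/andP=> xy /negP nexy.
case: (Rlt_or_le (rgt x) (lft y)) => [|yx]; first by left.
case: (Rlt_or_le (rgt y) (lft x)) => [|xy']; first by right.
by case: nexy; apply/edge_iff.
Qed.

Lemma nested_interval_neighbour u x y :
  lft u <= lft x -> rgt x <= rgt u -> e x y -> y != u -> e u y.
Proof.
move=> ux xu /edge_intervals [xy yx] yu; apply/edge_iff; first by rewrite eq_sym.
split; lra.
Qed.

Lemma apart_neighbours_nested u x1 x2 x3 :
  e u x1 -> e u x2 -> e u x3 ->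
  apart e x1 x2 -> apart e x1 x3 -> apart e x2 x3 ->
  exists2 x, x \in [:: x1; x2; x3] & forall y, e x y -> y != u -> e u y.
Proof.
move=> /edge_intervals u1 /edge_intervals u2 /edge_intervals u3.
move=> /apart_intervals a12 /apart_intervals a13 /apart_intervals a23.
move: (lft_le_rgt x1) (lft_le_rgt x2) (lft_le_rgt x3) => ne1 ne2 ne3.
have [[l1 r1] | [[l2 r2] | [l3 r3]]] :
    (lft u <= lft x1 /\ rgt x1 <= rgt u) \/ (lft u <= lft x2 /\ rgt x2 <= rgt u) \/
    (lft u <= lft x3 /\ rgt x3 <= rgt u) by lra.
- by exists x1; [rewrite inE eqxx | move=> y; apply: nested_interval_neighbour].
- by exists x2; [rewrite !inE eqxx orbT | move=> y; apply: nested_interval_neighbour].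
- by exists x3; [rewrite !inE eqxx !orbT | move=> y; apply: nested_interval_neighbour].
Qed.

End IntervalModel.

Theorem mainTheorem6 (T : finType) (e : rel T) (k : nat)
    (s t : 'I_k -> T) (r : 'I_k -> nat) (u : T) (i1 i2 i3 : 'I_k) :
  simple_graph e ->
  interval_graph e ->
  rid_instance e s t r ->
  i1 != i2 -> i1 != i3 -> i2 != i3 ->
  far_terminal_at e s t u i1 ->
  far_terminal_at e s t u i2 ->
  far_terminal_at e s t u i3 ->
  ~ exists Q : 'I_k -> seq (seq T), rid_solution e s t r Q.
Proof.
move=> [esym e_irr] [lft [rgt [lft_le_rgt edge_iff]]] inst n12 n13 n23 F1 F2 F3.
move=> [Q sol].
have [P1 [x1 [y1 [P1Q x1P ux1 xy1 uy1]]]] := solution_escapes_far_terminal esym inst sol F1.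
have [P2 [x2 [y2 [P2Q x2P ux2 xy2 uy2]]]] := solution_escapes_far_terminal esym inst sol F2.
have [P3 [x3 [y3 [P3Q x3P ux3 xy3 uy3]]]] := solution_escapes_far_terminal esym inst sol F3.
have not_apart v y : (forall y, e v y -> y != u -> e u y) -> e v y -> ~~ apart e u y.
  move=> nbrs_sub vy; rewrite /apart negb_and !negbK.
  by case: eqP => //= /eqP uy; apply: nbrs_sub; rewrite // eq_sym.
have [x] := apart_neighbours_nested e_irr lft_le_rgt edge_iff ux1 ux2 ux3
  (solution_inner_apart sol n12 P1Q P2Q x1P x2P)
  (solution_inner_apart sol n13 P1Q P3Q x1P x3P)
  (solution_inner_apart sol n23 P2Q P3Q x2P x3P).
rewrite !inE => /or3P[] /eqP-> nbrs_sub.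
- exact: negP (not_apart _ _ nbrs_sub xy1) uy1.
- exact: negP (not_apart _ _ nbrs_sub xy2) uy2.
- exact: negP (not_apart _ _ nbrs_sub xy3) uy3.
Qed.
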